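(* Let $G$ be a complete $k$-partite graph ($k\ge3$) on $n$ vertices with parts $V_1,\dots,V_k$ and let $w_0$ be any initial weighting. Then for every $1\le i\le k$, $S_{w_0}(i)\le m_i$.
   Context: Robot crawler model: let $G=(V,E)$ be a finite connected simple graph with $|V|=n$. An initial weighting is a bijection $w_0:V\to\{-n,-n+1,\dots,-1\}$. At time $1$ the crawler visits $w_0^{-1}(-n)$. If the crawler visits vertex $v$ at time $t$, then $w_t(v)=t$ and $w_t(u)=w_{t-1}(u)$ for all $u\neq v$. If $\min_{y\in V}w_t(y)>0$, the process stops. Otherwise, at time $t+1$ the crawler moves to the neighbour $u$ of $v$ minimising $w_t(u)$. A vertex is ''cleaned'' at the first time it is visited. A complete $k$-partite graph with parts $V_1,\dots,V_k$ has an edge between $u$ and $v$ iff they lie in different parts. The surplus $S_{w_0}(i)$ of part $V_i$ is the number of not-yet-cleaned vertices of $V_i$ at the first moment when all vertices of $V\setminus V_i$ have been cleaned (and $0$ if $V_i$ is fully cleaned by then). The quantity $m_i$ is defined by $$m_i=\max\Big\{x\ge 0:\ \exists\, y\ge 0 \text{ with } 2y+x\le n \text{ and } \Big|\bigcup_{j=1}^{2y+x}w_0^{-1}(-j)\cap V_i\Big|=y+x\Big\},$$ i.e. the largest $x$ such that, for some $y\ge0$, exactly $y+x$ of the $2y+x$ cleanest vertices (those with initial weights $-1,\dots,-(2y+x)$) lie in $V_i$. Equivalently, with $X(t)=|\{v\in V_i: w_0(v)\ge -t\}|-|\{v\in V\setminus V_i: w_0(v)\ge -t\}|$, $m_i=\max_{0\le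 t\le n}X(t)$. *)

From mathcomp Require Import all_boot all_order all_algebra.
Set Implicit Arguments. Unset Strict Implicit. Unset Printing Implicit Defensive.
Import Order.TTheory GRing.Theory Num.Theory.
Local Open Scope ring_scope.

Definition next_vertex (T : finType) (e : rel T) (w : T -> int) (v : T) : T :=
  odflt v [pick u | e v u && [forall x, e v x ==> (w u <= w x)]].

Definition upd (T : finType) (w : T -> int) (v : T) (t : int) : T -> int :=
  fun u => if u == v then t else w u.

(* crawl e w0 v1 t = (w_t, vertex visited at time t), for t >= 1;
   v1 is the vertex with w0 v1 = -n, visited at time 1.
   (crawl at 0 is (w0, v1) as a harmless convention.) The process is
   continued formally past its stopping time; this is irrelevant for the
   surplus, which is determined before the process stops. *)
Fixpoint crawl (T : finType) (e : rel T) (w0 : T -> int) (v1 : T) (t : nat)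
  : (T -> int) * T :=
  match t with
  | 0%N => (w0, v1)
  | t'.+1 =>
      let: (w, v) := crawl e w0 v1 t' in
      let v' := if t' is 0%N then v1 else next_vertex e w v in
      (upd w v' (t'.+1)%:Z, v')
  end.

Definition crawl_pos (T : finType) (e : rel T) (w0 : T -> int) (v1 : T) (t : nat) : T :=
  (crawl e w0 v1 t).2.

Definition cleaned (T : finType) (e : rel T) (w0 : T -> int) (v1 : T) (t : nat) (u : T) : bool :=
  has (fun s => crawl_pos e w0 v1 s == u) (iota 1 t).

Definition kpart_rel (T : finType) (k : nat) (p : T -> 'I_k) : rel T :=
  fun u v => p u != p v.

Definition outside_cleaned (T : finType) (k : nat) (p : T -> 'I_k) (w0 : T -> int)
  (v1 : T) (i : 'I_k) (t : nat) : bool :=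
  [forall u, (p u != i) ==> cleaned (kpart_rel p) w0 v1 t u].

Definition first_outside_cleaned (T : finType) (k : nat) (p : T -> 'I_k) (w0 : T -> int)
  (v1 : T) (i : 'I_k) (t : nat) : bool :=
  outside_cleaned p w0 v1 i t && [forall s : 'I_t, ~~ outside_cleaned p w0 v1 i s].

Definition uncleaned_in_part (T : finType) (k : nat) (p : T -> 'I_k) (w0 : T -> int)
  (v1 : T) (i : 'I_k) (t : nat) : nat :=
  #|[set u | (p u == i) && ~~ cleaned (kpart_rel p) w0 v1 t u]|.

Definition cleanest_in_part (T : finType) (k : nat) (p : T -> 'I_k) (w0 : T -> int)
  (i : 'I_k) (j : nat) : nat :=
  #|[set v | (p v == i) && ((- (j%:Z) <= w0 v) && (w0 v <= -1))]|.

Definition m_part (T : finType) (k : nat) (p : T -> 'I_k) (w0 : T -> int) (i : 'I_k) : nat :=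
  (\max_(x < #|T|.+1 | [exists y : 'I_#|T|.+1,
        (y.*2 + x <= #|T|)%N && (cleanest_in_part p w0 i (y.*2 + x) == y + x)%N]) x)%N.

From mathcomp Require Import all_boot all_order all_algebra.
From mathcomp Require Import zify.
Import Order.TTheory GRing.Theory Num.Theory.
Local Open Scope ring_scope.
Set Implicit Arguments. Unset Strict Implicit.

(* While some vertex outside its current part is dirty, the crawler moves to the dirtiest
   one.  Rank the vertices from the cleanest end, so that rank r has initial weight -r.  Along
   the walk one keeps a threshold L such that the L cleanest vertices are untouched, and the
   dirty vertices of V_i ranked beyond L (plus the crawler, if it sits in V_i) are outnumbered
   by the excess of V_i over the other parts among some ranks L+1, ..., j.  When the crawler
   enters the top L at rank L'+1, every dirty vertex ranked beyond L' lies in its previous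
   part, so L can drop to L' and the excess pays for them.  Once V \ V_i is clean the top L
   lies in V_i, so the surplus is at most the excess X(j) of the j cleanest vertices, hence
   at most m_i. *)

Section Crawler.
Variables (T : finType) (e : rel T) (w0 : T -> int) (v1 : T).

Local Notation pos := (crawl_pos e w0 v1).
Local Notation weight t := (crawl e w0 v1 t).1.

Lemma crawlS t : crawl e w0 v1 t.+1 = (upd (weight t) (pos t.+1) t.+1%:Z, pos t.+1).
Proof. by rewrite /crawl_pos /=; case: (crawl e w0 v1 t). Qed.

Lemma crawl_posSS t : pos t.+2 = next_vertex e (weight t.+1) (pos t.+1).
Proof. by rewrite /crawl_pos /=; case: (crawl e w0 v1 t). Qed.

Lemma cleanedS t u : cleaned e w0 v1 t.+1 u = cleaned e w0 v1 t u || (pos t.+1 == u).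
Proof. by rewrite /cleaned -[t.+1]addn1 iotaD has_cat /= orbF add1n addn1. Qed.

Lemma weight_uncleaned t u : ~~ cleaned e w0 v1 t u -> weight t u = w0 u.
Proof.
elim: t => [//|t IH]; rewrite cleanedS negb_or crawlS /= /upd => /andP[u_dirty u_ne].
by rewrite eq_sym (negbTE u_ne) IH.
Qed.

Lemma weight_cleaned t u : cleaned e w0 v1 t u -> 0 < weight t u.
Proof.
elim: t => [//|t IH]; rewrite cleanedS crawlS /= /upd eq_sym.
by case: eqP => [//|_]; rewrite orbF => /IH.
Qed.

End Crawler.

Lemma next_vertexP (T : finType) (e : rel T) (w : T -> int) v :
  (exists x, e v x) ->
  e v (next_vertex e w v) /\ forall x, e v x -> w (next_vertex e w v) <= w x.
Proof.
move=> [x vx]; rewrite /next_vertex; case: pickP => [u /andP[vu /forallP u_min] | no_min].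
  by split => // y vy; exact: implyP (u_min y) vy.
have [u vu u_min] := @arg_minP _ _ _ x (e v) w vx.
move: (no_min u); rewrite vu /= => /negbT/forallPn[y].
by rewrite negb_imply => /andP[vy]; rewrite u_min.
Qed.

(* [x] is one of the initial weights [-b, ..., -a-1], i.e. that of a vertex ranked
   [a+1, ..., b] from the cleanest end. *)
Definition in_window (a b : nat) (x : int) : bool := (-(b%:Z) <= x) && (x < -(a%:Z)).

Lemma card_window_le (T : finType) (w : T -> int) (a b : nat) :
  injective w -> (#|[pred v | in_window a b (w v)]| <= b - a)%N.
Proof.
move=> w_inj; rewrite cardE -(size_map (fun v => `|w v|%N)) -(size_iota a.+1 (b - a)).
apply: uniq_leq_size.
  rewrite map_inj_in_uniq ?enum_uniq // => u v; rewrite !mem_enum !inE /in_window.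
  by move=> u_in v_in uv; apply: w_inj; lia.
by move=> m /mapP[v]; rewrite mem_enum inE mem_iota /in_window => v_in ->; lia.
Qed.

Lemma card_window_split (T : finType) (P : pred T) (w : T -> int) (a b c : nat) :
  (a <= b <= c)%N ->
  #|[pred v | P v && in_window a c (w v)]| =
  (#|[pred v | P v && in_window a b (w v)]| + #|[pred v | P v && in_window b c (w v)]|)%N.
Proof.
move=> abc; rewrite -(cardID [pred v | -(b%:Z) <= w v]); congr (_ + _)%N.
  by apply: eq_card => v; rewrite !inE /in_window; lia.
by apply: eq_card => v; rewrite !inE /in_window; lia.
Qed.

Lemma exists_other_part (T : finType) (k : nat) (p : T -> 'I_k) :
  (1 < k)%N -> (forall j, exists v, p v = j) -> forall j, exists x, p x != j.
Proof.
move=> k_gt1 p_surj j.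
have /card_gt0P[j' j'_ne] : (0 < #|predC1 j|)%N by rewrite cardC1 card_ord; lia.
by have [x px] := p_surj j'; exists x; rewrite px.
Qed.

Section CompleteMultipartite.
Variables (T : finType) (k : nat) (p : T -> 'I_k) (w0 : T -> int) (v1 : T) (i : 'I_k).
Hypothesis other_part : forall j : 'I_k, exists x, p x != j.
Hypothesis w0_inj : injective w0.
Hypothesis w0_range : forall v, - (#|T|%:Z) <= w0 v <= -1.

Local Notation n := #|T|.
Local Notation pos := (crawl_pos (kpart_rel p) w0 v1).
Local Notation weight t := (crawl (kpart_rel p) w0 v1 t).1.

Definition window_in a b := #|[pred v | (p v == i) && in_window a b (w0 v)]|.
Definition window_out a b := #|[pred v | (p v != i) && in_window a b (w0 v)]|.

Lemma card_window a b : (a <= b <= n)%N -> #|[pred v | in_window a b (w0 v)]| = (b - a)%N.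
Proof.
move=> abn.
have all_in_window : n = #|[pred v | true && in_window 0 n (w0 v)]|.
  by apply/esym/eq_card => v; rewrite !inE /in_window; have := w0_range v; lia.
rewrite (@card_window_split _ _ _ 0 b) in all_in_window; last by lia.
rewrite (@card_window_split _ _ _ 0 a) in all_in_window; last by lia.
have drop_true a' b' :
    #|[pred v | true && in_window a' b' (w0 v)]| = #|[pred v | in_window a' b' (w0 v)]|.
  exact: eq_card.
rewrite !drop_true {drop_true} in all_in_window.
have := card_window_le 0 a w0_inj; have := card_window_le b n w0_inj.
have := card_window_le a b w0_inj; lia.
Qed.

Lemma window_in_out a b : (a <= b <= n)%N -> (window_in a b + window_out a b)%N = (b - a)%N.
Proof.
move=> abn; rewrite -(card_window abn) -(cardID [pred v | p v == i]).
by congr (_ + _)%N; apply: eq_card => v; rewrite !inE andbC.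
Qed.

Lemma window_in_split a b c : (a <= b <= c)%N ->
  window_in a c = (window_in a b + window_in b c)%N.
Proof. exact: card_window_split. Qed.

Lemma window_out_split a b c : (a <= b <= c)%N ->
  window_out a c = (window_out a b + window_out b c)%N.
Proof. exact: card_window_split. Qed.

Lemma window_gap_le_m_part j :
  (j <= n)%N -> (window_in 0 j - window_out 0 j <= m_part p w0 i)%N.
Proof.
move=> jn; have := window_in_out (a := 0) (b := j); rewrite subn0 => /(_ jn) in_out.
case: (leqP (window_out 0 j) (window_in 0 j)) => [out_le_in | /ltnW]; last first.
  by rewrite -subn_eq0 => /eqP ->.
have x_lt : (window_in 0 j - window_out 0 j < n.+1)%N by lia.
have y_lt : (window_out 0 j < n.+1)%N by lia.
apply: leq_trans (leq_bigmax_cond (Ordinal x_lt) _) => //=.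
apply/existsP; exists (Ordinal y_lt) => /=.
have -> : ((window_out 0 j).*2 + (window_in 0 j - window_out 0 j))%N = j by lia.
have -> : (window_out 0 j + (window_in 0 j - window_out 0 j))%N = window_in 0 j by lia.
rewrite jn /cleanest_in_part cardsE; apply/eqP/eq_card => v.
by rewrite !inE /in_window; have := w0_range v; lia.
Qed.

Lemma fresh_window u L : w0 u = -(L.+1%:Z) ->
  exists2 j, (L <= j <= n)%N & ((p u == i) + window_out L j <= window_in L j)%N.
Proof.
move=> u_w; have := w0_range u; rewrite u_w => u_range.
case: (boolP (p u == i)) => [u_in | u_out].
  exists L.+1; first lia.
  rewrite [window_out _ _]eq_card0 => [|v]; last first.
    rewrite !inE /in_window; apply/negP => /andP[v_out v_w].
    have v_u : v = u by apply: w0_inj; lia.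
    by rewrite v_u u_in in v_out.
  by apply/card_gt0P; exists u; rewrite !inE u_in /in_window u_w; lia.
exists L; first lia.
by rewrite [window_out _ _]eq_card0 // => v; rewrite !inE /in_window; lia.
Qed.

Definition dirty t v := ~~ cleaned (kpart_rel p) w0 v1 t v.

Lemma dirtyS t v : dirty t.+1 v = dirty t v && (pos t.+1 != v).
Proof. by rewrite /dirty cleanedS negb_or. Qed.

Lemma pos_stepP s :
  p (pos s.+1) != p (pos s.+2) /\
  forall x, p (pos s.+1) != p x -> weight s.+1 (pos s.+2) <= weight s.+1 x.
Proof.
rewrite crawl_posSS; apply: next_vertexP.
by have [x x_out] := other_part (p (pos s.+1)); exists x; rewrite /kpart_rel eq_sym.
Qed.

Lemma pos_step_dirtiest s :
  (exists2 x, dirty s.+1 x & p (pos s.+1) != p x) ->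
  dirty s.+1 (pos s.+2) /\
  forall x, dirty s.+1 x -> p (pos s.+1) != p x -> w0 (pos s.+2) <= w0 x.
Proof.
move=> [x x_dirty x_out]; have [_ u_min] := pos_stepP s.
have u_dirty : dirty s.+1 (pos s.+2).
  apply/negP => /weight_cleaned u_pos; have := u_min x x_out.
  rewrite (weight_uncleaned x_dirty); have := w0_range x; lia.
split=> // y y_dirty y_out; have := u_min y y_out.
by rewrite (weight_uncleaned y_dirty) (weight_uncleaned u_dirty).
Qed.

Definition dirty_below t L := #|[pred v | (p v == i) && dirty t v && (w0 v < -(L%:Z))]|.

Definition crawl_inv t L : Prop :=
  (forall v, -(L%:Z) <= w0 v -> dirty t v) /\
  ((forall v, p v = i -> ~~ dirty t v) \/
   exists2 j, (L <= j <= n)%N &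
     (dirty_below t L + (p (pos t) == i) + window_out L j <= window_in L j)%N).

Lemma crawl_inv_init : w0 v1 = -(n%:Z) -> crawl_inv 1 n.-1.
Proof.
move=> w0_v1; have n_gt0 : (0 < n)%N by apply/card_gt0P; exists v1.
have dirty1 v : dirty 1 v = (v1 != v) by rewrite dirtyS.
split=> [v v_w|]; first by rewrite dirty1; apply: contraTneq v_w => <-; rewrite w0_v1; lia.
have [j jL ineq] := @fresh_window v1 n.-1 ltac:(rewrite w0_v1; lia).
right; exists j => //; rewrite (_ : dirty_below 1 n.-1 = 0%N) //.
apply: eq_card0 => v; rewrite !inE dirty1; apply/negP => /andP[/andP[_ v1v] v_w].
have v_v1 : v = v1 by apply: w0_inj; rewrite w0_v1; have := w0_range v; lia.
by rewrite v_v1 eqxx in v1v.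
Qed.

Lemma crawl_inv_step_stuck s L :
  (forall x, dirty s.+1 x -> p (pos s.+1) = p x) ->
  crawl_inv s.+1 L -> crawl_inv s.+2 L.
Proof.
move=> stuck [top_dirty inv]; have [cu _] := pos_stepP s.
have same_dirty v : dirty s.+2 v = dirty s.+1 v.
  rewrite dirtyS; case v_dirty: (dirty s.+1 v) => //=.
  by apply: contraTneq cu => ->; rewrite negbK (stuck _ v_dirty).
split=> [v /top_dirty|]; first by rewrite same_dirty.
case: inv => [V_i_clean | [j jL ineq]]; first by left=> v /V_i_clean; rewrite same_dirty.
case: (eqVneq (p (pos s.+1)) i) => [c_in | c_out].
  have u_out : (p (pos s.+2) == i) = false by rewrite -c_in eq_sym (negbTE cu).
  have -> : dirty_below s.+2 L = dirty_below s.+1 L.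
    by apply: eq_card => v; rewrite !inE same_dirty.
  by right; exists j => //; move: ineq; rewrite u_out c_in eqxx; lia.
left=> v v_in; rewrite same_dirty; apply/negP => /stuck c_v.
by move: c_out; rewrite c_v v_in eqxx.
Qed.

Lemma crawl_inv_step_below s L :
  dirty s.+1 (pos s.+2) -> w0 (pos s.+2) < -(L%:Z) ->
  crawl_inv s.+1 L -> crawl_inv s.+2 L.
Proof.
move=> u_dirty u_below [top_dirty inv].
split=> [v v_top|].
  by rewrite dirtyS top_dirty //=; apply: contraTneq v_top => <-; rewrite -ltNge.
case: inv => [V_i_clean | [j jL ineq]].
  by left=> v v_in; rewrite dirtyS (negbTE (V_i_clean v v_in)).
have below_split : dirty_below s.+1 L = ((p (pos s.+2) == i) + dirty_below s.+2 L)%N.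
  rewrite /dirty_below (cardD1 (pos s.+2)) !inE u_dirty u_below !andbT; congr (_ + _)%N.
  apply: eq_card => v; rewrite !inE [dirty s.+2 _]dirtyS [_ == v]eq_sym.
  by case: (v == pos s.+2); rewrite /= ?andbF ?andbT.
by right; exists j => //; move: ineq; rewrite below_split; lia.
Qed.

Lemma crawl_inv_step_top s L L' :
  dirty s.+1 (pos s.+2) ->
  (forall x, dirty s.+1 x -> p (pos s.+1) != p x -> w0 (pos s.+2) <= w0 x) ->
  w0 (pos s.+2) = -(L'.+1%:Z) -> (L' < L)%N ->
  crawl_inv s.+1 L -> crawl_inv s.+2 L'.
Proof.
move=> u_dirty u_min u_w L'L [top_dirty inv]; have [cu _] := pos_stepP s.
have below_in_part_c v : dirty s.+2 v -> w0 v < -(L'%:Z) -> p v = p (pos s.+1).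
  rewrite dirtyS => /andP[v_dirty uv] v_w; apply/eqP; rewrite eq_sym.
  apply: contraTT v_w => cv; have := u_min v v_dirty cv.
  have : w0 v != w0 (pos s.+2) by apply: contraNneq uv => /w0_inj ->.
  by rewrite u_w; lia.
split=> [v v_top|].
  rewrite dirtyS top_dirty /=; last by lia.
  by apply: contraTneq v_top => <-; rewrite u_w; lia.
case: inv => [V_i_clean | [j jL ineq]].
  by left=> v v_in; rewrite dirtyS (negbTE (V_i_clean v v_in)).
right; case: (eqVneq (p (pos s.+1)) i) => [c_in | c_out]; last first.
  have [j' j'L ineq'] := fresh_window u_w.
  exists j' => //; rewrite (_ : dirty_below s.+2 L' = 0%N) //.
  apply: eq_card0 => v; rewrite !inE; apply/negP => /andP[/andP[v_in v_dirty] v_w].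
  by move: c_out; rewrite -(below_in_part_c v v_dirty v_w) v_in.
have u_out : (p (pos s.+2) == i) = false by rewrite -c_in eq_sym (negbTE cu).
have out_one : window_out L' L = 1%N.
  rewrite -(card1 (pos s.+2)); apply: eq_card => v; rewrite !inE /in_window.
  apply/idP/eqP => [/andP[v_out v_w] | ->]; last by rewrite u_out u_w; lia.
  have v_dirty : dirty s.+1 v by apply: top_dirty; lia.
  have cv : p (pos s.+1) != p v by rewrite c_in eq_sym.
  by apply: w0_inj; have := u_min v v_dirty cv; lia.
have below_le : (dirty_below s.+2 L' <= dirty_below s.+1 L + window_in L' L)%N.
  rewrite /dirty_below /window_in -cardUI; apply: leq_trans (leq_addr _ _).
  apply/subset_leq_card/subsetP => v; rewrite !inE [dirty s.+2 _]dirtyS /in_window.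
  case/andP => [/andP[-> /andP[-> _]] v_w]; rewrite v_w.
  by case: (ltP (w0 v) (-(L%:Z))).
exists j; first lia.
have in_split := @window_in_split L' L j ltac:(lia).
have out_split := @window_out_split L' L j ltac:(lia).
by move: ineq below_le; rewrite u_out c_in eqxx in_split out_split out_one; lia.
Qed.

Lemma crawl_inv_step s L : crawl_inv s.+1 L -> exists L', crawl_inv s.+2 L'.
Proof.
move=> inv.
case: (boolP [exists x, dirty s.+1 x && (p (pos s.+1) != p x)]) => [/existsP[x] | /existsPn stuck].
  case/andP=> x_dirty x_out; have [|u_dirty u_min] := @pos_step_dirtiest s; first by exists x.
  case: (ltP (w0 (pos s.+2)) (-(L%:Z))) => [u_below | u_top].
    by exists L; apply: crawl_inv_step_below.
  have := w0_range (pos s.+2) => u_range.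
  by exists (`|w0 (pos s.+2)| - 1)%N; apply: crawl_inv_step_top inv => //; lia.
exists L; apply: crawl_inv_step_stuck inv => x x_dirty; apply/eqP.
by move: (stuck x); rewrite x_dirty negbK.
Qed.

Lemma crawl_inv_exists s : w0 v1 = -(n%:Z) -> exists L, crawl_inv s.+1 L.
Proof.
move=> w0_v1; elim: s => [|s [L inv]]; first by exists n.-1; exact: crawl_inv_init.
exact: crawl_inv_step inv.
Qed.

Lemma crawl_inv_surplus t L :
  crawl_inv t L -> outside_cleaned p w0 v1 i t ->
  (uncleaned_in_part p w0 v1 i t <= m_part p w0 i)%N.
Proof.
move=> [top_dirty inv] /forallP out_clean.
have dirty_in v : dirty t v -> p v = i.
  by move=> v_dirty; apply/eqP; apply: contraNT v_dirty => /(implyP (out_clean v)) ->.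
rewrite /uncleaned_in_part cardsE.
case: inv => [V_i_clean | [j jL ineq]].
  rewrite eq_card0 // => v; rewrite !inE; apply/negP => /andP[/eqP v_in].
  by apply/negP; apply: V_i_clean.
have surplus : #|[pred u | (p u == i) && dirty t u]| = (dirty_below t L + window_in 0 L)%N.
  rewrite -(cardID [pred v | w0 v < -(L%:Z)]); congr (_ + _)%N; apply: eq_card => v.
  rewrite !inE /in_window -leNgt; have := w0_range v.
  case v_top: (-(L%:Z) <= w0 v) => /=; last by rewrite andbF.
  by rewrite top_dirty // andbT; lia.
have no_out_top : window_out 0 L = 0%N.
  apply: eq_card0 => v; rewrite !inE /in_window; apply/negP => /andP[v_out /andP[v_top _]].
  by rewrite (dirty_in v (top_dirty v v_top)) eqxx in v_out.
have in_split := @window_in_split 0 L j ltac:(lia).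
have out_split := @window_out_split 0 L j ltac:(lia).
rewrite surplus; apply: leq_trans (window_gap_le_m_part (proj2 (andP jL))).
by move: ineq; rewrite in_split out_split no_out_top; lia.
Qed.

Lemma card_dirty_step t : (#|[pred v | dirty t.+1 v]| <= #|[pred v | dirty t v]|)%N.
Proof. by apply/subset_leq_card/subsetP => v; rewrite !inE dirtyS => /andP[]. Qed.

Lemma card_dirty_visit t :
  dirty t (pos t.+1) -> (#|[pred v | dirty t.+1 v]| < #|[pred v | dirty t v]|)%N.
Proof.
move=> u_dirty; rewrite [X in (_ < X)%N](cardD1 (pos t.+1)) inE u_dirty add1n ltnS.
apply/subset_leq_card/subsetP => v; rewrite !inE dirtyS => /andP[v_dirty uv].
by rewrite v_dirty andbT eq_sym.
Qed.

Lemma card_dirty_drop s : ~~ outside_cleaned p w0 v1 i s.+1 ->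
  (#|[pred v | dirty s.+3 v]| < #|[pred v | dirty s.+1 v]|)%N.
Proof.
case/forallPn => x; rewrite negb_imply => /andP[_]; rewrite -/(dirty s.+1 x) => x_dirty.
case: (boolP [exists y, dirty s.+1 y && (p (pos s.+1) != p y)]) => [/existsP[y] | /existsPn stuck].
  case/andP=> y_dirty y_out; have [|u_dirty _] := @pos_step_dirtiest s; first by exists y.
  exact: leq_ltn_trans (card_dirty_step s.+2) (card_dirty_visit u_dirty).
have [cu _] := pos_stepP s.
have c_x : p (pos s.+1) = p x by apply/eqP; move: (stuck x); rewrite x_dirty negbK.
have [|u_dirty _] := @pos_step_dirtiest s.+1.
  exists x; last by rewrite -c_x eq_sym.
  by rewrite dirtyS x_dirty; apply: contraTneq cu => ->; rewrite c_x negbK.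
exact: leq_trans (card_dirty_visit u_dirty) (card_dirty_step s.+1).
Qed.

Lemma outside_eventually_cleaned : exists t, outside_cleaned p w0 v1 i t.
Proof.
suff dirty_bound m s : (#|[pred v | dirty s.+1 v]| <= m)%N ->
    exists t, outside_cleaned p w0 v1 i t.
  exact: (dirty_bound n 0%N (max_card _)).
elim: m s => [|m IH] s dirty_le;
  case: (boolP (outside_cleaned p w0 v1 i s.+1)) => [done | not_done]; try by exists s.+1.
  by have := card_dirty_drop not_done; lia.
by apply: (IH s.+2); have := card_dirty_drop not_done; lia.
Qed.

End CompleteMultipartite.

Unset Implicit Arguments.
Set Strict Implicit.

Theorem lemma1 (T : finType) (k : nat) (p : T -> 'I_k) (w0 : T -> int) (v1 : T)
  (hk : (3 <= k)%N)
  (hpart : forall j : 'I_k, exists v : T, p v = j)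
  (hinj : injective w0)
  (hrange : forall v : T, - (#|T|%:Z) <= w0 v <= -1)
  (hv1 : w0 v1 = - (#|T|%:Z))
  (i : 'I_k) :
  exists t : nat,
    first_outside_cleaned p w0 v1 i t /\
    (uncleaned_in_part p w0 v1 i t <= m_part p w0 i)%N.
Proof.
have other_part := exists_other_part (ltnW hk) hpart.
have [t t_done t_min] := ex_minnP (outside_eventually_cleaned v1 i other_part hrange).
have [s t_eq] : exists s, t = s.+1.
  case: t t_done {t_min} => [|s] t_done; last by exists s.
  by have [x x_out] := other_part i; move: (forallP t_done x); rewrite x_out.
exists t; split.
  rewrite /first_outside_cleaned t_done; apply/forallP => s'; apply/negP => /t_min.
  by rewrite leqNgt ltn_ord.
have [L inv] := crawl_inv_exists i other_part hinj hrange s hv1.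
by rewrite t_eq in t_done *; exact: crawl_inv_surplus inv t_done.
Qed.
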